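(* Let $I$ be a squarefree monomial ideal in a polynomial ring $S$ over a field that is nearly a complete intersection (NCI), and let $F$ be a minimal monomial generator of $I$. Then $F$ has a nontrivial common factor with some other minimal monomial generator of $I$.
   Context: An ideal is a complete intersection (CI) if it is generated by a regular sequence. The support of a monomial ideal is the set of variables appearing in at least one minimal monomial generator. For a squarefree monomial ideal $I$ and a variable $x$, $I(x=1)$ denotes the ideal generated by the monomials obtained from the minimal monomial generators of $I$ by setting $x = 1$. A squarefree monomial ideal $I$ is NCI if it is generated in degree at least two, is not a CI, and for each variable $x$ in the support of $I$, $I(x=1)$ is a CI. *)

From mathcomp Require Import all_boot all_algebra.
From mathcomp Require Import mpoly.
Set Implicit Arguments. Unset Strict Implicit. Unset Printing Implicit Defensive.
Import GRing.Theory.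
Local Open Scope ring_scope.

Section Defs.
Variables (K : fieldType) (n : nat).

Definition mideal := {mpoly K[n]} -> Prop.

Definition ideal_span (A : {mpoly K[n]} -> Prop) : mideal :=
  fun p => exists s : seq ({mpoly K[n]} * {mpoly K[n]}),
    (forall x, x \in s -> A x.2) /\ p = \sum_(x <- s) x.1 * x.2.

Definition ideal_seq (fs : seq {mpoly K[n]}) : mideal :=
  ideal_span (fun g => g \in fs).

Definition ideal_eq (I J : mideal) : Prop := forall p, I p <-> J p.

Definition regular_seq (fs : seq {mpoly K[n]}) : Prop :=
  (forall i, (i < size fs)%N -> forall g,
     ideal_seq (take i fs) (g * nth 0 fs i) -> ideal_seq (take i fs) g)
  /\ ~ ideal_seq fs 1.

Definition is_CI (I : mideal) : Prop :=
  exists fs, regular_seq fs /\ ideal_eq I (ideal_seq fs).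

Definition squarefree_mnm (m : 'X_{1..n}) : Prop := forall i, (m i <= 1)%N.

Definition mnm_dvd (m' m : 'X_{1..n}) : Prop := forall i, (m' i <= m i)%N.

Definition mono_ideal (A : 'X_{1..n} -> Prop) : mideal :=
  ideal_span (fun g => exists m, A m /\ g = 'X_[m]).

Definition squarefree_monomial_ideal (I : mideal) : Prop :=
  exists gs : seq 'X_{1..n}, (forall m, m \in gs -> squarefree_mnm m) /\
    ideal_eq I (mono_ideal (fun m => m \in gs)).

Definition min_mono_gen (I : mideal) (m : 'X_{1..n}) : Prop :=
  I 'X_[m] /\ forall m', mnm_dvd m' m -> I 'X_[m'] -> m' = m.

Definition in_support (I : mideal) (i : 'I_n) : Prop :=
  exists m, min_mono_gen I m /\ (0 < m i)%N.

(* the monomial obtained from x^m by setting x_i = 1 *)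
Definition set1_mnm (i : 'I_n) (m : 'X_{1..n}) : 'X_{1..n} :=
  [multinom (if j == i then 0%N else m j) | j < n].

Definition ideal_set1 (I : mideal) (i : 'I_n) : mideal :=
  mono_ideal (fun m' => exists m, min_mono_gen I m /\ m' = set1_mnm i m).

Definition gen_deg_ge2 (I : mideal) : Prop :=
  forall m, min_mono_gen I m -> (2 <= mdeg m)%N.

Definition is_NCI (I : mideal) : Prop :=
  gen_deg_ge2 I /\ ~ is_CI I /\
  forall i, in_support I i -> is_CI (ideal_set1 I i).

End Defs.

From mathcomp Require Import all_boot all_algebra.
From mathcomp Require Import mpoly.
From mathcomp Require Import ring.
From Stdlib Require Import Classical.

(* Suppose F shares no variable with the other minimal generators of I.  Being
   squarefree of degree >= 2, F is divisible by two distinct variables x_a, x_b.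
   The substitution psi : x_a |-> x_a + x_b, x_b |-> x_a x_b (other variables
   fixed) makes S a free psi(S)-module with basis 1, x_a, so psi carries regular
   sequences to regular sequences.  It sends the generator F / x_a of I(x_a = 1)
   to F and fixes every other minimal generator, as those involve neither x_a
   nor x_b.  Hence psi maps a regular sequence generating I(x_a = 1) to one
   generating I, and I would be a complete intersection. *)

Set Implicit Arguments. Unset Strict Implicit. Unset Printing Implicit Defensive.
Import GRing.Theory.
Local Open Scope ring_scope.

Section IdealSpan.
Variables (K : fieldType) (n : nat).
Local Notation S := {mpoly K[n]}.
Implicit Types (A B : S -> Prop) (p q r g : S).

Lemma ideal_span_ind A (P : S -> Prop) :
  P 0 -> (forall p q, P p -> P q -> P (p + q)) ->
  (forall r g, A g -> P (r * g)) ->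
  forall p, ideal_span A p -> P p.
Proof.
move=> P0 PD PM _ [s [hs ->]]; elim: s hs => [|x s IH] hs; first by rewrite big_nil.
rewrite big_cons; apply: PD; first by apply: PM; apply: hs; rewrite mem_head.
by apply: IH => y ys; apply: hs; rewrite inE ys orbT.
Qed.

Lemma ideal_span0 A : ideal_span A 0.
Proof. by exists [::]; rewrite big_nil. Qed.

Lemma ideal_spanD A p q : ideal_span A p -> ideal_span A q -> ideal_span A (p + q).
Proof.
move=> [s1 [h1 ->]] [s2 [h2 ->]]; exists (s1 ++ s2); rewrite big_cat.
by split=> // x; rewrite mem_cat => /orP[]; [apply: h1 | apply: h2].
Qed.

Lemma ideal_spanMl A r p : ideal_span A p -> ideal_span A (r * p).
Proof.
move=> [s [hs ->]]; exists [seq (r * x.1, x.2) | x <- s]; split.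
  by move=> y /mapP[x xs ->] /=; apply: hs.
by rewrite big_map mulr_sumr; apply: eq_bigr => x _; rewrite mulrA.
Qed.

Lemma ideal_span_gen A g : A g -> ideal_span A g.
Proof.
move=> hg; exists [:: (1, g)]; rewrite big_seq1 mul1r.
by split=> // x; rewrite mem_seq1 => /eqP ->.
Qed.

Lemma ideal_span_sub A B p : (forall g, A g -> ideal_span B g) ->
  ideal_span A p -> ideal_span B p.
Proof.
move=> hAB; apply: (ideal_span_ind (P := ideal_span B)) => [|q1 q2|r g /hAB];
  [exact: ideal_span0 | exact: ideal_spanD | exact: ideal_spanMl].
Qed.

Lemma ideal_span_map A B (f : {rmorphism S -> S}) p :
  (forall g, A g -> B (f g)) -> ideal_span A p -> ideal_span B (f p).
Proof.
move=> hAB; apply: (ideal_span_ind (P := fun p => ideal_span B (f p))) => [|q1 q2|r g /hAB hg].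
- by rewrite rmorph0; exact: ideal_span0.
- by rewrite rmorphD; exact: ideal_spanD.
- by rewrite rmorphM; apply/ideal_spanMl/ideal_span_gen.
Qed.

Lemma ideal_seq_map (f : {rmorphism S -> S}) fs p :
  ideal_seq fs p -> ideal_seq (map f fs) (f p).
Proof. by apply: ideal_span_map => g; apply: map_f. Qed.

Lemma ideal_eq_map_span A B (f : {rmorphism S -> S}) fs :
  (forall g, A g -> B (f g)) -> (forall h, B h -> exists2 g, A g & h = f g) ->
  ideal_eq (ideal_span A) (ideal_seq fs) -> ideal_eq (ideal_span B) (ideal_seq (map f fs)).
Proof.
move=> AB BA eqA p; split; apply: ideal_span_sub.
  by move=> _ /BA[g Ag ->]; apply/ideal_seq_map/eqA/ideal_span_gen.
by move=> _ /mapP[h fs_h ->]; apply: (ideal_span_map AB); apply/eqA/ideal_span_gen.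
Qed.

End IdealSpan.

Section FreeOfRankTwo.
Variables (K : fieldType) (n : nat).
Local Notation S := {mpoly K[n]}.
Variables (psi : {rmorphism S -> S}) (u : S).
Hypothesis decomp_exists : forall g, exists x y, g = psi x + psi y * u.
Hypothesis decomp_eq0 : forall x y, psi x + psi y * u = 0 -> x = 0 /\ y = 0.

Lemma decomp_inj x y x' y' :
  psi x + psi y * u = psi x' + psi y' * u -> x = x' /\ y = y'.
Proof.
move=> e; have /decomp_eq0[/eqP + /eqP] : psi (x - x') + psi (y - y') * u = 0.
  by rewrite !rmorphB mulrBl addrACA e -opprD subrr.
by rewrite !subr_eq0 => /eqP-> /eqP->.
Qed.

Lemma ideal_map_decompP fs x y :
  ideal_seq (map psi fs) (psi x + psi y * u) <-> ideal_seq fs x /\ ideal_seq fs y.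
Proof.
split=> [|[hx hy]]; last first.
  by apply: ideal_spanD; [|rewrite mulrC; apply: ideal_spanMl]; exact: ideal_seq_map.
pose P g := exists x' y', [/\ g = psi x' + psi y' * u, ideal_seq fs x' & ideal_seq fs y'].
move=> hg; suff [x' [y' [/decomp_inj[-> ->] hx' hy']]] : P (psi x + psi y * u) by [].
move: hg; apply: (ideal_span_ind (P := P)).
- by exists 0, 0; rewrite !rmorph0 mul0r addr0; split=> //; exact: ideal_span0.
- move=> _ _ [x1 [y1 [-> hx1 hy1]]] [x2 [y2 [-> hx2 hy2]]].
  by exists (x1 + x2), (y1 + y2); rewrite !rmorphD mulrDl addrACA; split=> //; exact: ideal_spanD.
- move=> r _ /mapP[f hf ->]; have [c [d ->]] := decomp_exists r.
  exists (c * f), (d * f); split; [|apply: ideal_spanMl; exact: ideal_span_gen ..].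
  by rewrite !rmorphM; ring.
Qed.

Lemma regular_seq_map fs : regular_seq fs -> regular_seq (map psi fs).
Proof.
case=> hreg h1; split; last first.
  have decomp1 : psi 1 + psi 0 * u = 1 by rewrite rmorph1 rmorph0 mul0r addr0.
  by rewrite -decomp1 => /ideal_map_decompP[].
move=> i; rewrite size_map => hi g; have [x [y ->]] := decomp_exists g.
rewrite -map_take (nth_map 0) // mulrDl -mulrA (mulrC u) mulrA -!rmorphM.
by case/ideal_map_decompP => hx hy; apply/ideal_map_decompP; split; exact: hreg.
Qed.

End FreeOfRankTwo.

Section MPolyGen.
Variables (K : fieldType) (n : nat).
Local Notation S := {mpoly K[n]}.

Lemma mpoly_ring_ind (P : S -> Prop) :
  (forall c, P c%:MP) -> (forall i, P 'X_i) ->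
  (forall p q, P p -> P q -> P (p + q)) -> (forall p q, P p -> P q -> P (p * q)) ->
  forall p, P p.
Proof.
move=> PC PX PD PM; elim/mpolyind => [|c m p _ _ Pp]; first by rewrite -mpolyC0.
apply: PD => //; rewrite -mul_mpolyC; apply: (PM) => //; rewrite mpolyXE_id.
have P1 : P 1 by rewrite -mpolyC1.
apply: (big_ind P) => // i _.
by elim: (m i) => [|k IHk]; rewrite ?expr0 // exprS; apply: PM.
Qed.

Lemma rmorph_mpoly_ext (f g : {rmorphism S -> S}) :
  (forall c, f c%:MP = g c%:MP) -> (forall i, f 'X_i = g 'X_i) -> f =1 g.
Proof.
move=> hC hX; apply: mpoly_ring_ind => // p q hp hq.
  by rewrite !rmorphD hp hq.
by rewrite !rmorphM hp hq.
Qed.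

Lemma comp_mpolyXi (lq : n.-tuple S) i : comp_mpoly lq 'X_i = tnth lq i.
Proof. by rewrite comp_mpolyXU (tnth_nth 0). Qed.

Lemma mpolyXi_neq0 i : ('X_i : S) != 0.
Proof. by rewrite -msize_poly_eq0 msizeX. Qed.

Lemma mpolyX_submK (m m' : 'X_{1..n}) : (m <= m')%MM -> 'X_[m' - m] * 'X_[m] = 'X_[m'] :> S.
Proof. by move=> le_mm'; rewrite -mpolyXD submK. Qed.

Lemma mpolyXi_inj : injective (fun i : 'I_n => 'X_i : S).
Proof.
move=> i j /mpolyP/(_ U_(i)%MM); rewrite !mcoeffXU eqxx eq_sym.
by case: eqP => // _ /eqP; rewrite oner_eq0.
Qed.

End MPolyGen.

Section Esym2Subst.
Variables (K : fieldType) (n : nat) (a b : 'I_n).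
Hypothesis neq_ab : a != b.
Local Notation S := {mpoly K[n]}.

Definition esym2_subst : n.-tuple S := [tuple if i == a then 'X_a + 'X_b
  else if i == b then 'X_a * 'X_b else 'X_i | i < n].
Definition swap_subst : n.-tuple S :=
  [tuple if i == a then 'X_b else if i == b then 'X_a else 'X_i | i < n].
Definition kill_subst : n.-tuple S := [tuple if i == b then 0 else 'X_i | i < n].

Local Notation esym2 := (comp_mpoly esym2_subst).
Local Notation swap_ab := (comp_mpoly swap_subst).
Local Notation kill_b := (comp_mpoly kill_subst).

Lemma esym2Xa : esym2 'X_a = 'X_a + 'X_b.
Proof. by rewrite comp_mpolyXi tnth_mktuple eqxx. Qed.

Lemma esym2Xb : esym2 'X_b = 'X_a * 'X_b.
Proof. by rewrite comp_mpolyXi tnth_mktuple eqxx eq_sym (negbTE neq_ab). Qed.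

Lemma esym2Xi i : i != a -> i != b -> esym2 'X_i = 'X_i.
Proof. by move=> /negbTE ha /negbTE hb; rewrite comp_mpolyXi tnth_mktuple ha hb. Qed.

Lemma swap_esym2 p : swap_ab (esym2 p) = esym2 p.
Proof.
apply: (rmorph_mpoly_ext (f := (swap_ab \o esym2)%FUN : {rmorphism S -> S})) => [c|i] /=.
  by rewrite !comp_mpolyC.
have /negbTE neq_ba : b != a by rewrite eq_sym.
have [->|ha] := eqVneq i a.
  by rewrite esym2Xa rmorphD /= !comp_mpolyXi !tnth_mktuple eqxx neq_ba eqxx addrC.
have [->|hb] := eqVneq i b.
  by rewrite esym2Xb rmorphM /= !comp_mpolyXi !tnth_mktuple eqxx neq_ba eqxx mulrC.
by rewrite esym2Xi // comp_mpolyXi tnth_mktuple (negbTE ha) (negbTE hb).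
Qed.

Lemma kill_esym2 p : kill_b (esym2 p) = kill_b p.
Proof.
apply: (rmorph_mpoly_ext (f := (kill_b \o esym2)%FUN : {rmorphism S -> S})) => [c|i] /=.
  by rewrite !comp_mpolyC.
have [->|ha] := eqVneq i a.
  by rewrite esym2Xa rmorphD /= !comp_mpolyXi !tnth_mktuple eqxx (negbTE neq_ab) addr0.
have [->|hb] := eqVneq i b.
  by rewrite esym2Xb rmorphM /= !comp_mpolyXi !tnth_mktuple eqxx mulr0.
by rewrite esym2Xi.
Qed.

Lemma killX m : kill_b 'X_[m] = if m b == 0%N then 'X_[m] else 0.
Proof.
rewrite comp_mpolyX; case: eqP => hm.
  rewrite [RHS]mpolyXE_id; apply: eq_bigr => i _; rewrite tnth_mktuple.
  by case: eqP => [->|//]; rewrite hm !expr0.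
by rewrite (bigD1 b) //= tnth_mktuple eqxx expr0n (negbTE (introN eqP hm)) mul0r.
Qed.

Lemma kill_decomp p : exists q, p = kill_b p + 'X_b * q.
Proof.
elim/mpolyind: p => [|c m p _ _ [q ep]]; first by exists 0; rewrite rmorph0 mulr0 addr0.
have [qm em] : exists qm, 'X_[m] = kill_b 'X_[m] + 'X_b * qm.
  rewrite killX; case: (posnP (m b)) => [_|hm]; first by exists 0; rewrite mulr0 addr0.
  exists 'X_[m - U_(b)]; rewrite add0r mulrC mpolyX_submK // lep1mP.
  by rewrite -lt0n.
exists (c *: qm + q); rewrite comp_mpolyD comp_mpolyZ {1}em {1}ep.
by rewrite scalerDr scalerAr mulrDr addrACA.
Qed.

Lemma esym2_inj p : esym2 p = 0 -> p = 0.
Proof.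
have [k] := ubnP (msize p); elim: k p => // k IH p hk hp.
have [q ep] := kill_decomp p.
have kill_p : kill_b p = 0 by rewrite -kill_esym2 hp rmorph0.
rewrite kill_p add0r in ep.
have [q0|qn0] := eqVneq q 0; first by rewrite ep q0 mulr0.
have esym2_q : esym2 q = 0.
  move: hp; rewrite ep rmorphM /= esym2Xb => /eqP.
  by rewrite !mulf_eq0 !(negbTE (mpolyXi_neq0 _ _)) => /eqP.
rewrite ep (IH q) ?mulr0 //.
by move: hk; rewrite ep msizeM ?mpolyXi_neq0 // msizeX mdeg1.
Qed.

Lemma esym2_decomp_eq0 x y : esym2 x + esym2 y * 'X_a = 0 -> x = 0 /\ y = 0.
Proof.
move=> e.
have swap_e : esym2 x + esym2 y * 'X_b = 0.
  have swapXa : swap_ab 'X_a = 'X_b by rewrite comp_mpolyXi tnth_mktuple eqxx.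
  by rewrite -swapXa -(swap_esym2 x) -(swap_esym2 y) -rmorphM -rmorphD e rmorph0.
have : esym2 y * ('X_a - 'X_b) = 0.
  have -> : esym2 y * ('X_a - 'X_b) = (esym2 x + esym2 y * 'X_a) - (esym2 x + esym2 y * 'X_b).
    by ring.
  by rewrite e swap_e subrr.
move/eqP; rewrite mulf_eq0 subr_eq0 => /orP[/eqP esym2_y | /eqP/mpolyXi_inj eq_ab].
  have y0 := esym2_inj esym2_y; split=> //.
  by apply: esym2_inj; move: e; rewrite esym2_y mul0r addr0.
by move: neq_ab; rewrite eq_ab eqxx.
Qed.

Definition esym2_decomposable (g : S) := exists x y, g = esym2 x + esym2 y * 'X_a.

Lemma esym2_decomposableD g h :
  esym2_decomposable g -> esym2_decomposable h -> esym2_decomposable (g + h).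
Proof.
move=> [x [y ->]] [x' [y' ->]]; exists (x + x'), (y + y').
by rewrite !rmorphD mulrDl addrACA.
Qed.

Lemma esym2_decomposableMesym2 r g : esym2_decomposable g -> esym2_decomposable (esym2 r * g).
Proof. by move=> [x [y ->]]; exists (r * x), (r * y); rewrite !rmorphM; ring. Qed.

Lemma esym2_decomposableMXa g : esym2_decomposable g -> esym2_decomposable ('X_a * g).
Proof.
(* 'X_a is a root of T^2 - esym2('X_a) T + esym2('X_b) *)
move=> [x [y ->]]; exists (- ('X_b * y)), (x + 'X_a * y).
by rewrite rmorphN !rmorphM rmorphD rmorphM /= esym2Xa esym2Xb; ring.
Qed.

Lemma esym2_decomposableMXi i g : esym2_decomposable g -> esym2_decomposable ('X_i * g).
Proof.
move=> hg; have [->|ha] := eqVneq i a; first exact: esym2_decomposableMXa.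
have [->|hb] := eqVneq i b; last by rewrite -esym2Xi //; exact: esym2_decomposableMesym2.
have -> : 'X_b * g = esym2 'X_a * g + esym2 (-1) * ('X_a * g).
  by rewrite esym2Xa rmorphN rmorph1; ring.
by apply: esym2_decomposableD; apply: esym2_decomposableMesym2 => //; exact: esym2_decomposableMXa.
Qed.

Lemma esym2_decomp g : esym2_decomposable g.
Proof.
suff decomposableM : forall p g, esym2_decomposable g -> esym2_decomposable (p * g).
  rewrite -[g]mulr1; apply: decomposableM.
  by exists 1, 0; rewrite rmorph1 rmorph0 mul0r addr0.
apply: mpoly_ring_ind => [c|i|p q hp hq|p q hp hq] h hh.
- by rewrite -(comp_mpolyC c esym2_subst); exact: esym2_decomposableMesym2.
- exact: esym2_decomposableMXi.
- by rewrite mulrDl; apply: esym2_decomposableD; [exact: hp | exact: hq].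
- by rewrite -mulrA; apply: hp; apply: hq.
Qed.

Lemma esym2_set1_mnm (m : 'X_{1..n}) : m a = m b -> esym2 'X_[set1_mnm a m] = 'X_[m].
Proof.
move=> eq_m; have /negbTE neq_ba : b != a by rewrite eq_sym.
rewrite comp_mpolyX [RHS]mpolyXE_id (bigD1 a) // [RHS](bigD1 a) //=.
rewrite (bigD1 b) ?neq_ba // [X in _ = _ * X](bigD1 b) ?neq_ba //=.
rewrite !tnth_mktuple !mnmE eqxx neq_ba eqxx expr0 mul1r exprMn eq_m mulrA.
congr (_ * _); apply: eq_bigr => i /andP[/negbTE hib /negbTE hia].
by rewrite tnth_mktuple mnmE hia hib.
Qed.

End Esym2Subst.

Section MonomialIdeal.
Variables (K : fieldType) (n : nat).
Local Notation S := {mpoly K[n]}.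
Implicit Types (I : mideal K n) (m g : 'X_{1..n}).

Lemma mdeg_lt_dvd m g : mnm_dvd m g -> m <> g -> (mdeg m < mdeg g)%N.
Proof.
move=> /mnm_lepP le_mg neq_mg; rewrite -(submK le_mg) mdegD -[X in (X < _)%N]add0n.
rewrite ltn_add2r lt0n mdeg_eq0; apply/eqP => gm0; apply: neq_mg.
by rewrite -(submK le_mg) gm0 add0m.
Qed.

Lemma mono_ideal_msupp (A : 'X_{1..n} -> Prop) (p : S) :
  mono_ideal A p -> forall k, k \in msupp p -> exists2 m, A m & mnm_dvd m k.
Proof.
apply: (ideal_span_ind (P := fun p => forall k, k \in msupp p -> exists2 m, A m & mnm_dvd m k)).
- by move=> k; rewrite msupp0.
- by move=> q1 q2 hq1 hq2 k /msuppD_le; rewrite mem_cat => /orP[/hq1 | /hq2].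
- move=> r _ [m [Am ->]] k; rewrite (perm_mem (msuppMX _ _)) => /mapP[k' _ ->].
  by exists m => // i; rewrite mnmDE leq_addr.
Qed.

Lemma min_mono_gen_dvd I g : I 'X_[g] -> exists m, min_mono_gen I m /\ mnm_dvd m g.
Proof.
have [k] := ubnP (mdeg g); elim: k g => // k IH g lt_gk Ig.
have [[m' [dvd_m'g Im' neq_m'g]]|no_smaller] :=
  classic (exists m', [/\ mnm_dvd m' g, I 'X_[m'] & m' <> g]).
  have /IH/(_ Im')[m [min_m dvd_mm']] : (mdeg m' < k)%N.
    by rewrite -ltnS (leq_trans _ lt_gk) // ltnS mdeg_lt_dvd.
  by exists m; split=> // i; exact: leq_trans (dvd_mm' i) (dvd_m'g i).
exists g; split=> [|i //]; split=> // m' dvd_m'g Im'.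
by apply: NNPP => neq_m'g; apply: no_smaller; exists m'.
Qed.

Lemma mono_ideal_min_mono_gen I (A : 'X_{1..n} -> Prop) :
  ideal_eq I (mono_ideal A) -> ideal_eq I (mono_ideal (min_mono_gen I)).
Proof.
move=> eqI p; rewrite eqI; split; apply: ideal_span_sub => _ [m [hm ->]].
  have Im : I 'X_[m] by apply/eqI/ideal_span_gen; exists m.
  have [m' [min_m' /mnm_lepP dvd_m'm]] := min_mono_gen_dvd Im.
  rewrite -(mpolyX_submK _ dvd_m'm); apply/ideal_spanMl/ideal_span_gen.
  by exists m'.
by apply/eqI; case: hm.
Qed.

Lemma squarefree_min_mono_gen I m :
  squarefree_monomial_ideal I -> min_mono_gen I m -> squarefree_mnm m.
Proof.
move=> [gs [sq_gs eqI]] [Im min_m].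
have [|g gs_g dvd_gm] := mono_ideal_msupp (proj1 (eqI _) Im) (k := m).
  by rewrite msuppX mem_seq1.
have Ig : I 'X_[g] by apply/eqI/ideal_span_gen; exists g.
by rewrite -(min_m g dvd_gm Ig); exact: sq_gs.
Qed.

End MonomialIdeal.

Lemma squarefree_mnm_two_vars n (m : 'X_{1..n}) :
  squarefree_mnm m -> (2 <= mdeg m)%N -> exists a b : 'I_n, [/\ a != b, m a = 1%N & m b = 1%N].
Proof.
move=> sq_m deg_m.
have m01 i : m i != 0%N -> m i = 1%N.
  by move: (sq_m i); case: (m i) => [|[]].
have [a ma|m0] := pickP (fun i => m i != 0%N); last first.
  move: deg_m; rewrite mdegE big1 // => i _.
  by apply/eqP/negbFE/m0.
have [b /andP[ba mb]|m1] := pickP (fun i => (i != a) && (m i != 0%N)); last first.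
  move: deg_m; rewrite mdegE (bigD1 a) //= (m01 a ma) big1 // => i ia.
  by apply/eqP/negbFE; move: (m1 i); rewrite ia.
by exists a, b; rewrite eq_sym ba (m01 a ma) (m01 b mb).
Qed.

Theorem lemma4p2 (K : fieldType) (n : nat) (I : mideal K n) (F : 'X_{1..n})
  (hsq : squarefree_monomial_ideal I) (hnci : is_NCI I)
  (hF : min_mono_gen I F) :
  exists G : 'X_{1..n}, min_mono_gen I G /\ G <> F /\
    exists i : 'I_n, (0 < F i)%N /\ (0 < G i)%N.
Proof.
apply: NNPP => no_common_var.
have [deg2 [notCI CI_set1]] := hnci.
have [a [b [neq_ab Fa Fb]]] :=
  squarefree_mnm_two_vars (squarefree_min_mono_gen hsq hF) (deg2 F hF).
have [fs [reg_fs eq_fs]] : is_CI (ideal_set1 I a).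
  by apply: CI_set1; exists F; rewrite Fa.
have esym2_gen m : min_mono_gen I m ->
    comp_mpoly (esym2_subst K a b) 'X_[set1_mnm a m] = 'X_[m].
  move=> min_m; apply: esym2_set1_mnm => //.
  have [->|neq_mF] := classic (m = F); first by rewrite Fa Fb.
  have vanish i : F i = 1%N -> m i = 0%N.
    move=> Fi; apply/eqP; rewrite -leqn0 leqNgt; apply/negP => mi.
    by apply: no_common_var; exists m; split=> //; split=> //; exists i; rewrite Fi.
  by rewrite !vanish.
apply: notCI; exists (map (comp_mpoly (esym2_subst K a b)) fs); split.
  exact: (regular_seq_map (esym2_decomp neq_ab) (esym2_decomp_eq0 neq_ab)).
have [gs [_ eqI]] := hsq.
move=> p; rewrite (mono_ideal_min_mono_gen eqI).
apply: (ideal_eq_map_span _ _ eq_fs) => [_ [_ [[m [min_m ->]] ->]]|_ [m [min_m ->]]].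
  by exists m; split=> //; exact: esym2_gen.
exists 'X_[set1_mnm a m]; last exact/esym/esym2_gen.
by exists (set1_mnm a m); split=> //; exists m.
Qed.
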